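(* Let $(S,d)$ be a metric space and let $P$ be a closed, proper, non-empty subset of $S$. Define $h_P(x)=\max\big(-1,\sup_{p\in P}[1-d(x,p)]\big)$ for $x\in S$. Then $h_P\in\operatorname{ext}(B^S_{\mathrm{FM}})$. If there exists $x\in S\setminus P$ with $d(x,P)<2$, then $h_P\in\operatorname{ext}_*(B^S_{\mathrm{FM}})$; otherwise $h_P$ is a trivial extreme point, i.e. $|h_P|=\mathbf{1}$.
   Context: $\mathrm{BL}(S)$ is the space of bounded real-valued Lipschitz functions on $S$, $|f|_L=\sup_{x\neq y}|f(x)-f(y)|/d(x,y)$, $\|f\|_{\mathrm{FM}}=\max(\|f\|_\infty,|f|_L)$, $B^S_{\mathrm{FM}}=\{f\in\mathrm{BL}(S):\|f\|_{\mathrm{FM}}\le1\}$, $\operatorname{ext}$ denotes extreme points, and $\operatorname{ext}_*(B^S_{\mathrm{FM}})=\operatorname{ext}(B^S_{\mathrm{FM}})\setminus\{f\in B^S_{\mathrm{FM}}:|f|=\mathbf{1}\}$. *)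

From HB Require Import structures.
From mathcomp Require Import all_boot all_order all_algebra.
From mathcomp Require Import boolp classical_sets reals.
Set Implicit Arguments. Unset Strict Implicit. Unset Printing Implicit Defensive.
Import Order.TTheory GRing.Theory Num.Theory.
Local Open Scope ring_scope.
Local Open Scope classical_set_scope.

Definition is_metric (R : realType) (S : Type) (d : S -> S -> R) : Prop :=
  (forall x y, d x y = 0 <-> x = y) /\
  (forall x y, d x y = d y x) /\
  (forall x y z, d x z <= d x y + d y z).

Definition metric_closed (R : realType) (S : Type) (d : S -> S -> R) (P : set S) : Prop :=
  forall x, (forall e : R, 0 < e -> exists2 p, P p & d x p < e) -> P x.

Definition dist_set (R : realType) (S : Type) (d : S -> S -> R) (P : set S) (x : S) : R :=
  inf [set d x p | p in P].

Definition hP (R : realType) (S : Type) (d : S -> S -> R) (P : set S) (x : S) : R :=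
  Num.max (-1) (sup [set 1 - d x p | p in P]).

(* f in B_FM^S : f is real-valued on S with ||f||_FM = max(||f||_inf, |f|_L) <= 1,
   i.e. sup |f| <= 1 and sup_{x<>y} |f x - f y| / d(x,y) <= 1 *)
Definition in_BFM (R : realType) (S : Type) (d : S -> S -> R) (f : S -> R) : Prop :=
  (forall x, `|f x| <= 1) /\
  (forall x y, x <> y -> `|f x - f y| / d x y <= 1).

Definition is_ext_BFM (R : realType) (S : Type) (d : S -> S -> R) (f : S -> R) : Prop :=
  in_BFM d f /\
  forall (g h : S -> R) (t : R), in_BFM d g -> in_BFM d h -> 0 < t < 1 ->
    f = (fun x => t * g x + (1 - t) * h x) -> g = f /\ h = f.

Definition is_ext_star_BFM (R : realType) (S : Type) (d : S -> S -> R) (f : S -> R) : Prop :=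
  is_ext_BFM d f /\ (fun x => `|f x|) <> (fun _ => 1).

From HB Require Import structures.
From mathcomp Require Import all_boot all_order all_algebra.
From mathcomp Require Import boolp classical_sets reals.
From mathcomp Require Import ring lra.
Import Order.TTheory GRing.Theory Num.Theory.
Local Open Scope ring_scope.
Local Open Scope classical_set_scope.

(* Since sup_p (1 - d(x,p)) = 1 - d(x,P), h_P = max(-1, 1 - d(x,P)); it equals 1 on P,
   is 1-Lipschitz and lies in the ball.  Every f in the ball with f = 1 on P satisfies
   f(x) >= 1 - d(x,p) for p in P, hence f >= h_P: h_P is the least element of the ball
   that is 1 on P.  If h_P = t g + (1-t) k with g, k in the ball, then g = k = 1 on P
   (1 is extreme in [-1,1]), so g, k >= h_P and the convex combination forces equality.
   Off a closed P the distance is positive, so |h_P(x)| < 1 as soon as d(x,P) < 2,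
   while d(x,P) >= 2 gives h_P(x) = -1. *)

Lemma norm_subr_max_le {R : realDomainType} (c a b : R) :
  `|Num.max c a - Num.max c b| <= `|a - b|.
Proof.
case: (lerP c a) => ha; case: (lerP c b) => hb;
  rewrite ?(max_r ha) ?(max_r hb) ?(max_l (ltW ha)) ?(max_l (ltW hb)) ?subrr ?normr0 //.
- rewrite !ger0_norm; lra.
- rewrite !ler0_norm; lra.
Qed.

Lemma convex_comb_eq_lb {R : realFieldType} {t a b c : R} :
  0 < t < 1 -> c <= a -> c <= b -> c = t * a + (1 - t) * b -> a = c /\ b = c.
Proof. move=> /andP[t0 t1] ca cb e; split; nra. Qed.

Lemma convex_comb_eq_ub {R : realFieldType} {t a b c : R} :
  0 < t < 1 -> a <= c -> b <= c -> c = t * a + (1 - t) * b -> a = c /\ b = c.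
Proof.
move=> t01 ac bc e; have [] := @convex_comb_eq_lb _ t (- a) (- b) (- c) t01.
- by rewrite lerN2.
- by rewrite lerN2.
- by rewrite e; ring.
- by move=> /oppr_inj -> /oppr_inj ->.
Qed.

Section Metric.
Context {R : realType} {S : Type} {d : S -> S -> R}.
Hypothesis hd : is_metric d.

Lemma metric_eq0 x y : d x y = 0 <-> x = y.
Proof. by case: hd. Qed.

Lemma metric_refl x : d x x = 0.
Proof. exact/metric_eq0. Qed.

Lemma metricC x y : d x y = d y x.
Proof. by case: hd => _ []. Qed.

Lemma metric_triangle x y z : d x z <= d x y + d y z.
Proof. by case: hd => _ []. Qed.

Lemma metric_ge0 x y : 0 <= d x y.
Proof.
by have := metric_triangle x y x; rewrite (metricC y x) metric_refl; lra.
Qed.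

Lemma metric_gt0 x y : x <> y -> 0 < d x y.
Proof.
move=> xy; rewrite lt_neqAle metric_ge0 andbT eq_sym.
by apply/eqP => /metric_eq0.
Qed.

Context {P : set S}.

Lemma dist_set_le x p : P p -> dist_set d P x <= d x p.
Proof.
move=> Pp; apply: ge_inf; last by exists p.
by exists 0 => _ [q _ <-]; exact: metric_ge0.
Qed.

Hypothesis hPne : P !=set0.

Lemma lb_le_dist_set c x : (forall p, P p -> c <= d x p) -> c <= dist_set d P x.
Proof.
move=> lb; apply: lb_le_inf => [|_ [p Pp <-]]; last exact: lb.
by case: hPne => p Pp; exists (d x p), p.
Qed.

Lemma dist_set_lt x e : dist_set d P x < e -> exists2 p, P p & d x p < e.
Proof.
move=> lt; have [|_ [p Pp <-] dxp] := inf_lt _ lt; last by exists p.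
by case: hPne => p Pp; exists (d x p), p.
Qed.

Lemma metric_closed_dist_set_gt0 x :
  metric_closed d P -> ~ P x -> 0 < dist_set d P x.
Proof.
move=> Pcl nPx; rewrite ltNge; apply/negP => le0; apply/nPx/Pcl => e e0.
by apply: dist_set_lt; exact: le_lt_trans le0 e0.
Qed.

Lemma dist_set_ge0 x : 0 <= dist_set d P x.
Proof. by apply: lb_le_dist_set => p _; exact: metric_ge0. Qed.

Lemma dist_set_on x : P x -> dist_set d P x = 0.
Proof.
move=> Px; apply/le_anti; rewrite dist_set_ge0 andbT.
by rewrite -(metric_refl x); exact: dist_set_le.
Qed.

Lemma dist_set_lip x y : dist_set d P x <= dist_set d P y + d x y.
Proof.
rewrite -lerBlDr; apply: lb_le_dist_set => p Pp.
by have := dist_set_le x p Pp; have := metric_triangle x y p; lra.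
Qed.

Lemma sup_one_sub_dist x :
  sup [set 1 - d x p | p in P] = 1 - dist_set d P x.
Proof.
have ub : has_ubound [set 1 - d x p | p in P].
  by exists 1 => _ [p _ <-]; have := metric_ge0 x p; lra.
apply/le_anti/andP; split.
  apply: ge_sup => [|_ [p Pp <-]]; last by have := dist_set_le x p Pp; lra.
  by case: hPne => p Pp; exists (1 - d x p), p.
rewrite lerBlDr addrC -lerBlDr; apply: lb_le_dist_set => p Pp.
by have := ub_le_sup ub (ex_intro2 _ _ p Pp erefl); lra.
Qed.

End Metric.

Section BumpFunction.
Context {R : realType} {S : Type} {d : S -> S -> R} {P : set S}.
Hypotheses (hd : is_metric d) (hPne : P !=set0).

Lemma hP_dist x : hP d P x = Num.max (-1) (1 - dist_set d P x).
Proof. by rewrite /hP sup_one_sub_dist. Qed.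

Lemma hP_on p : P p -> hP d P p = 1.
Proof. by move=> Pp; rewrite hP_dist dist_set_on // subr0 max_r //; lra. Qed.

Lemma hP_far x : 2 <= dist_set d P x -> hP d P x = -1.
Proof. by move=> far; rewrite hP_dist max_l //; lra. Qed.

Lemma hP_in_BFM : in_BFM d (hP d P).
Proof.
split=> [x | x y xy].
  rewrite hP_dist ler_norml le_max lexx /= ge_max.
  by have := dist_set_ge0 hd hPne x; lra.
rewrite ler_pdivrMr ?metric_gt0 // mul1r !hP_dist.
apply: le_trans; first exact: norm_subr_max_le.
rewrite ler_norml.
have := dist_set_lip hd hPne x y; have := dist_set_lip hd hPne y x.
by rewrite (metricC hd y x); lra.
Qed.

Lemma in_BFM_range {f} : in_BFM d f -> forall x, -1 <= f x <= 1.
Proof. by case=> fb _ x; rewrite -ler_norml. Qed.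

Lemma in_BFM_ge_hP {f} :
  in_BFM d f -> (forall p, P p -> f p = 1) -> forall x, hP d P x <= f x.
Proof.
move=> fB fP x; rewrite hP_dist ge_max; have /andP[-> _] /= := in_BFM_range fB x.
rewrite lerBlDr addrC -lerBlDr; apply: lb_le_dist_set => // p Pp.
have [->|xp] := pselect (x = p).
  by rewrite fP // subrr; exact: metric_ge0.
have := proj2 fB x p xp; rewrite ler_pdivrMr ?metric_gt0 // mul1r (fP p Pp).
by rewrite ler_norml; lra.
Qed.

Lemma hP_ext : is_ext_BFM d (hP d P).
Proof.
split=> [|g k t gB kB t01 hE]; first exact: hP_in_BFM.
have hEx x : hP d P x = t * g x + (1 - t) * k x by rewrite hE.
have onP p : P p -> g p = 1 /\ k p = 1.
  move=> Pp; have /andP[_ g1] := in_BFM_range gB p; have /andP[_ k1] := in_BFM_range kB p.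
  by apply: (convex_comb_eq_ub t01 g1 k1); rewrite -hEx hP_on.
have hP_le_g := in_BFM_ge_hP gB (fun p Pp => (onP p Pp).1).
have hP_le_k := in_BFM_ge_hP kB (fun p Pp => (onP p Pp).2).
by split; apply/funext => x; have [] := convex_comb_eq_lb t01 (hP_le_g x) (hP_le_k x) (hEx x).
Qed.

Lemma hP_norm_lt1 x :
  metric_closed d P -> ~ P x -> dist_set d P x < 2 -> `|hP d P x| < 1.
Proof.
move=> Pcl nPx near; have := metric_closed_dist_set_gt0 hPne x Pcl nPx.
rewrite hP_dist max_r; last lra.
by move=> pos; rewrite ltr_norml; lra.
Qed.

End BumpFunction.

Theorem lemmaC2 (R : realType) (S : Type) (d : S -> S -> R) (P : set S)
  (hd : is_metric d) (hPc : metric_closed d P) (hPprop : P <> setT) (hPne : P !=set0) :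
  is_ext_BFM d (hP d P) /\
  ((exists x, ~ P x /\ dist_set d P x < 2) -> is_ext_star_BFM d (hP d P)) /\
  (~ (exists x, ~ P x /\ dist_set d P x < 2) -> (fun x => `|hP d P x|) = (fun _ => 1)).
Proof.
have ext := hP_ext hd hPne.
split=> //; split=> [[x [nPx near]] | far].
  split=> // /(congr1 (fun f => f x)) /= hx1.
  by have := hP_norm_lt1 hd hPne x hPc nPx near; rewrite hx1 ltxx.
apply/funext => x; have [Px|nPx] := pselect (P x).
  by rewrite hP_on // normr1.
rewrite hP_far ?normrN ?normr1 // leNgt; apply/negP => near.
by apply: far; exists x.
Qed.
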